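(* The triple $(\mathbb{G}, \varepsilon, (\cdot)^* )$ is a comonad in Kleisli form on the category of $\sigma$-structures, i.e. the following equations hold (for all $\sigma$-structures $\mathcal{A}$ and homomorphisms $f : \mathbb{G}\mathcal{A} \to \mathcal{B}$, $g : \mathbb{G}\mathcal{B} \to \mathcal{C}$): \[ \varepsilon_{\mathcal{A}}^* = \mathsf{id}_{\mathbb{G} \mathcal{A}}, \qquad \varepsilon \circ f^* = f, \qquad (g \circ f^* )^* = g^* \circ f^* . \]
   Context: Fix a relational vocabulary $\sigma$ and a notion of guarding $\mathfrak{g}$ (atom, loose, or clique guards). A subset $X$ of a $\sigma$-structure $\mathcal{A}$ is $\mathfrak{g}$-guarded if it is contained in the support of a tuple $\vec{a}$ with $\mathcal{A} \models G(\vec{a})$ for some $\mathfrak{g}$-guard $G$. A play is a non-empty list $p = [U_1,\ldots,U_n]$ of $\mathfrak{g}$-guarded sets of $\mathcal{A}$, with last element $\lambda(p) = U_n$; plays are ordered by the prefix order $\sqsubseteq$. A focussed play is a pair $\langle p, a\rangle$ with $a \in \lambda(p)$. Define $\langle p, a\rangle \sim \langle q, a'\rangle$ iff $a = a'$, the greatest common prefix $p \sqcap q$ is non-empty, and $a$ belongs to $\lambda(u)$ for every $u \in [p\sqcap q, p] \cup [p \sqcap q, q]$. Write $[p,a]$ for the $\sim$-equivalence class of $\langle p, a\rangle$. The structure $\mathbb{G}\mathcal{A}$ (written $\mathbb{G}^{\mathfrak{g}}\mathcal{A}$ when the guard type matters) has universe the set of these classes, and $R^{\mathbb{G}\mathcal{A}}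 = \{([p,a_1],\ldots,[p,a_r]) \mid R^{\mathcal{A}}(a_1,\ldots,a_r)\}$. The counit $\varepsilon_{\mathcal{A}} : \mathbb{G}\mathcal{A} \to \mathcal{A}$ is $\varepsilon_{\mathcal{A}}([p,a]) = a$. For a homomorphism $h : \mathbb{G}\mathcal{A} \to \mathcal{B}$, its coextension $h^* : \mathbb{G}\mathcal{A} \to \mathbb{G}\mathcal{B}$ is $h^*([[U_1,\ldots,U_n],a]) = [[V_1,\ldots,V_n], h([[U_1,\ldots,U_n],a])]$, where $V_j = \{ h([[U_1,\ldots,U_j], b]) \mid b \in U_j\}$ for $1 \le j \le n$. *)

From Stdlib Require Import ClassicalEpsilon.
From mathcomp Require Import all_boot.
Set Implicit Arguments. Unset Strict Implicit. Unset Printing Implicit Defensive.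

Record vocab := Vocab { sym :> Type; arity : sym -> nat }.

(** The universe is given as a predicate [dom] on a
    carrier type (an ordinary structure is the case [dom = fun _ => True]);
    relations only contain tuples of elements of the universe. *)
Record structure (s : vocab) := Structure {
  carrier :> Type;
  dom : carrier -> Prop;
  rel : forall r : sym s, ('I_(arity r) -> carrier) -> Prop;
  rel_dom : forall (r : sym s) (t : 'I_(arity r) -> carrier) (i : 'I_(arity r)), @rel r t -> dom (t i) }.

Arguments dom {s} A _ : rename.
Arguments rel {s} A r _ : rename.




Definition is_hom s (A B : structure s) (f : A -> B) : Prop :=
  (forall x, dom A x -> dom B (f x)) /\
  (forall (r : sym s) (t : 'I_(arity r) -> A), rel A r t -> rel B r (fun i => f (t i))).
Arguments is_hom {s} A B f.

Inductive guard_kind := AtomGuard | LooseGuard | CliqueGuard.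

Definition in_tuple (T : Type) n (t : 'I_n -> T) (x : T) : Prop := exists i, t i = x.

(** atom guards R(x) (R in sigma) or equality atoms x = y *)
Definition atom_guarded s (A : structure s) (X : A -> Prop) : Prop :=
  (exists (r : sym s) (t : 'I_(arity r) -> A), rel A r t /\ forall x, X x -> in_tuple t x)
  \/ (exists a, dom A a /\ forall x, X x -> x = a).

(** loose guards: a tuple (listed by Y) satisfying a conjunction of atoms over
    its own variables, each pair of variables occurring together in some atom
    (equality atoms allowed) *)
Definition loose_guarded s (A : structure s) (X : A -> Prop) : Prop :=
  exists Y : seq A,
    (forall y, List.In y Y -> dom A y) /\
    (forall x, X x -> List.In x Y) /\
    (forall y y', List.In y Y -> List.In y' Y ->
       y = y' \/ exists (r : sym s) (t : 'I_(arity r) -> A),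
                   rel A r t /\ in_tuple t y /\ in_tuple t y' /\
                   forall i, List.In (t i) Y).

(** clique guards: as loose guards, but the atoms may contain further
    (existentially quantified) elements *)
Definition clique_guarded s (A : structure s) (X : A -> Prop) : Prop :=
  exists Y : seq A,
    (forall y, List.In y Y -> dom A y) /\
    (forall x, X x -> List.In x Y) /\
    (forall y y', List.In y Y -> List.In y' Y ->
       y = y' \/ exists (r : sym s) (t : 'I_(arity r) -> A),
                   rel A r t /\ in_tuple t y /\ in_tuple t y').

Definition guarded (g : guard_kind) s (A : structure s) (X : A -> Prop) : Prop :=
  match g with
  | AtomGuard => atom_guarded X
  | LooseGuard => loose_guarded X
  | CliqueGuard => clique_guarded X
  end.
Arguments guarded g {s} A X.

Definition play_seq s (A : structure s) := seq (A -> Prop).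

Definition is_play g s (A : structure s) (p : play_seq A) : Prop :=
  p <> [::] /\ List.Forall (guarded g A) p.
Arguments is_play g {s} A p.

Definition lambda s (A : structure s) (p : play_seq A) : A -> Prop :=
  last (fun _ => False) p.

Definition prefix (T : Type) (r p : seq T) : Prop := exists u, p = r ++ u.

Definition is_gcp (T : Type) (r p q : seq T) : Prop :=
  prefix r p /\ prefix r q /\ (forall u, prefix u p -> prefix u q -> prefix u r).

Definition fplay s (A : structure s) := (play_seq A * A)%type.

Definition is_fplay g s (A : structure s) (x : fplay A) : Prop :=
  is_play g A x.1 /\ lambda x.1 x.2.
Arguments is_fplay g {s} A x.

Definition fsim s (A : structure s) (x y : fplay A) : Prop :=
  x.2 = y.2 /\
  exists r, is_gcp r x.1 y.1 /\ r <> [::] /\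
    forall u, prefix r u -> (prefix u x.1 \/ prefix u y.1) -> lambda u x.2.

Definition fclass g s (A : structure s) (x : fplay A) : fplay A -> Prop :=
  fun y => is_fplay g A y /\ fsim x y.

Definition Gcarrier g s (A : structure s) : Type :=
  {C : fplay A -> Prop | exists x, C = fclass g x}.

Definition gcls g s (A : structure s) (x : fplay A) : Gcarrier g A :=
  exist _ (fclass g x) (ex_intro _ x erefl).

Definition Gdom g s (A : structure s) (C : Gcarrier g A) : Prop :=
  exists x, is_fplay g A x /\ sval C = fclass g x.

Definition Grel g s (A : structure s) (r : sym s) (t : 'I_(arity r) -> Gcarrier g A) : Prop :=
  exists (p : play_seq A) (a : 'I_(arity r) -> A),
    is_play g A p /\ (forall i, lambda p (a i)) /\ rel A r a /\
    forall i, sval (t i) = fclass g (p, a i).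

Lemma Grel_dom g s (A : structure s) r t i : @Grel g s A r t -> Gdom (t i).
Proof.
move=> [p [a [Hp [Hl [_ Ht]]]]]; exists (p, a i); split; last exact: Ht.
by rewrite /is_fplay /=; split.
Qed.

Definition G g s (A : structure s) : structure s :=
  @Structure s (Gcarrier g A) (@Gdom g s A) (@Grel g s A) (@Grel_dom g s A).

(** a chosen representative of a class: a genuine focussed play
    representing it whenever there is one (i.e. whenever the class is an
    element of the universe of G A) *)
Definition rep g s (A : structure s) (C : G g A) : fplay A :=
  match excluded_middle_informative (Gdom C) with
  | left H => proj1_sig (constructive_indefinite_description _ H)
  | right _ => proj1_sig (constructive_indefinite_description _ (proj2_sig C))
  end.

Definition counit g s (A : structure s) : G g A -> A :=
  fun C => (rep C).2.

(** coextension: h*[[U_1..U_n],a] = [[V_1..V_n], h[[U_1..U_n],a]] with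
    V_j = { h [[U_1..U_j], b] | b in U_j } *)
Definition Vset g s (A B : structure s) (h : G g A -> B) (p : play_seq A) (j : nat) : B -> Prop :=
  fun y => exists b, lambda (take j p) b /\ y = h (gcls g (take j p, b)).

Definition Vplay g s (A B : structure s) (h : G g A -> B) (p : play_seq A) : play_seq B :=
  [seq Vset h p j | j <- iota 1 (size p)].

Definition coext g s (A B : structure s) (h : G g A -> B) : G g A -> G g B :=
  fun C => gcls g (Vplay h (rep C).1, h C).

From Pilot Require Import Defs.
From Stdlib Require Import Classical ClassicalEpsilon.
From Stdlib Require Import FunctionalExtensionality PropExtensionality ProofIrrelevance.
From Stdlib Require List.
From mathcomp Require Import all_boot zify.
Set Implicit Arguments. Unset Strict Implicit. Unset Printing Implicit Defensive.

(* A class [p,a] is unchanged by two operations on its representatives: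
   truncating p to any prefix after which every last set still contains a, and
   appending to p a set containing a.  Describing ~ by such a truncation index
   shows that ~ is an equivalence and that the coextension can be computed on
   any representative: f^*[p,a] = [V(p), f[p,a]] with V(p) = [V_1, ..., V_n].
   Appending is also why V(p) is again a play: if S is a guard of the last set
   of q, a homomorphism f maps S, via b |-> f[q S, b], onto a guard of the same
   kind containing the last set of V(q).  The three laws are then pointwise
   identities between the sets V_j. *)

Lemma predext (T : Type) (P Q : T -> Prop) : (forall x, P x <-> Q x) -> P = Q.
Proof.
by move=> PQ; apply: functional_extensionality => x; apply: propositional_extensionality.
Qed.

Lemma InP (T : eqType) (x : T) (l : seq T) : reflect (List.In x l) (x \in l).
Proof.
elim: l => [|y l IHl] /=; first by right.
by rewrite in_cons; apply: (iffP orP) => [[/eqP ->|/IHl]|[->|/IHl]]; auto.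
Qed.

Section Prefix.
Variable T : Type.
Implicit Types (x y : T) (p q r u : seq T).

Lemma prefixE u p : Defs.prefix u p <-> take (size u) p = u.
Proof.
split=> [[v ->]|<-]; first by rewrite take_size_cat.
by exists (drop (size u) p); rewrite cat_take_drop.
Qed.

Lemma prefix_size u p : Defs.prefix u p -> size u <= size p.
Proof. by move=> [v ->]; rewrite size_cat leq_addr. Qed.

Lemma prefix_take j p : Defs.prefix (take j p) p.
Proof. by exists (drop j p); rewrite cat_take_drop. Qed.

Lemma prefix_takel r p j : Defs.prefix r p -> size r <= j -> Defs.prefix r (take j p).
Proof. by move=> /prefixE rp rj; apply/prefixE; rewrite take_takel. Qed.

Lemma prefix_cons x y u p : Defs.prefix (x :: u) (y :: p) <-> x = y /\ Defs.prefix u p.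
Proof. by split=> [[v [-> ->]]|[-> [v ->]]]; [split; last exists v|exists v]. Qed.

Lemma gcp_nil p q :
  (forall x u, Defs.prefix (x :: u) p -> ~ Defs.prefix (x :: u) q) -> is_gcp [::] p q.
Proof.
move=> no_common; split; first by exists p.
split; first by exists q.
by move=> [|x u] up uq; [exists [::]|case: (no_common x u up uq)].
Qed.

Lemma gcp_cons x r p q : is_gcp r p q -> is_gcp (x :: r) (x :: p) (x :: q).
Proof.
move=> [rp [rq rmax]]; split; first by apply/prefix_cons.
split; first by apply/prefix_cons.
move=> [|y u]; first by exists (x :: r).
by move=> /prefix_cons[-> up] /prefix_cons[_ uq]; apply/prefix_cons; split=> //; apply: rmax.
Qed.

Lemma gcp_exists p q : exists r, is_gcp r p q.
Proof.
elim: p q => [|x p IHp] q.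
  by exists [::]; apply: gcp_nil => y u [].
case: q => [|y q].
  by exists [::]; apply: gcp_nil => z u _ [].
case: (classic (x = y)) => [<-|neq_xy].
  by have [r gcp_r] := IHp q; exists (x :: r); apply: gcp_cons.
by exists [::]; apply: gcp_nil => z u /prefix_cons[-> _] /prefix_cons[/neq_xy].
Qed.

End Prefix.

Section Classes.
Variables (g : guard_kind) (s : vocab) (A : structure s).
Implicit Types (p q : play_seq A) (x y : fplay A) (a : A).

Definition lambda_from p k a := forall j, k <= j <= size p -> lambda (take j p) a.

Definition fsim_idx x y := x.2 = y.2 /\ exists k,
  [/\ 0 < k <= minn (size x.1) (size y.1), take k x.1 = take k y.1,
      lambda_from x.1 k x.2 & lambda_from y.1 k y.2].

Lemma fsim_idxP x y : fsim x y <-> fsim_idx x y.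
Proof.
case: x y => p a [q b]; rewrite /fsim /fsim_idx /=; split.
  move=> [<- [r [[rp [rq _]] [r_nil from_r]]]]; split=> //; exists (size r).
  have r0 : 0 < size r by case: (r) r_nil.
  have [rp' rq'] := (prefix_size rp, prefix_size rq).
  split; [lia | by move/prefixE: rp => ->; move/prefixE: rq => -> | |].
  - move=> j /andP[rj _]; apply: from_r; [exact: prefix_takel | left; exact: prefix_take].
  - move=> j /andP[rj _]; apply: from_r; [exact: prefix_takel | right; exact: prefix_take].
move=> [<- [k [/andP[k0 k_le] pq_k from_p from_q]]]; split=> //.
have [r [rp [rq rmax]]] := gcp_exists p q.
have k_r : k <= size r.
  have /prefix_size : Defs.prefix (take k p) r.
    by apply: rmax; [|rewrite pq_k]; exact: prefix_take.
  by rewrite size_takel //; lia.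
exists r; split; first by split.
split=> [r_nil|u ru [up|uq]]; first by rewrite r_nil /= in k_r; lia.
- have [ru' up'] := (prefix_size ru, prefix_size up).
  by move/prefixE: up => <-; apply: from_p; lia.
- have [ru' uq'] := (prefix_size ru, prefix_size uq).
  by move/prefixE: uq => <-; apply: from_q; lia.
Qed.

Lemma fsim_idx_sym x y : fsim_idx x y -> fsim_idx y x.
Proof.
move=> [e [k [k_le pq_k from_x from_y]]]; split=> //; exists k.
by split; rewrite // minnC.
Qed.

Lemma eq_take_le p q k j : take k p = take k q -> j <= k -> take j p = take j q.
Proof. by move=> pq_k jk; rewrite -(take_takel p jk) pq_k take_takel. Qed.

Lemma lambda_from_le p q k j a :
    take k p = take k q -> k <= size q -> j <= k ->
  lambda_from q j a -> lambda_from p k a -> lambda_from p j a.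
Proof.
move=> pq_k kq jk from_q from_p i /andP[ji ip].
case: (leqP k i) => [ki|ik]; first by apply: from_p; lia.
by rewrite (eq_take_le pq_k (ltnW ik)); apply: from_q; lia.
Qed.

Lemma fsim_idx_trans x y z : fsim_idx x y -> fsim_idx y z -> fsim_idx x z.
Proof.
case: x y z => p a [q b] [t c] /=.
move=> [/= <- [k1 [k1_le pq from_p from_q1]]] [/= <- [k2 [k2_le qt from_q2 from_t]]].
split=> //; exists (minn k1 k2) => /=.
have from_q : lambda_from q (minn k1 k2) a by case: (leqP k1 k2).
split; first by lia.
- by rewrite (eq_take_le pq (geq_minl _ _)) (eq_take_le qt (geq_minr _ _)).
- by apply: (lambda_from_le pq _ (geq_minl _ _)) => //; lia.
- by apply: (lambda_from_le (esym qt) _ (geq_minr _ _)) => //; lia.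
Qed.

Lemma fsim_idx_refl x : is_fplay g A x -> fsim_idx x x.
Proof.
case: x => p a [[p_nil _] /= pa]; split=> //; exists (size p) => /=.
split=> //; first by rewrite minnn leqnn andbT; case: (p) p_nil.
all: by move=> j /andP[pj jp]; have -> : j = size p by [lia]; rewrite take_size.
Qed.

Lemma Gcarrier_inj (C D : Gcarrier g A) : sval C = sval D -> C = D.
Proof. by case: C D => c pc [d pd] /= cd; apply: subset_eq_compat. Qed.

Lemma gcls_eq x y : fsim_idx x y -> gcls g x = gcls g y.
Proof.
move=> xy; apply: Gcarrier_inj; apply: predext => z /=; rewrite /fclass !fsim_idxP.
split=> -[z_ok sim]; split=> //.
  exact: fsim_idx_trans (fsim_idx_sym xy) sim.
exact: fsim_idx_trans xy sim.
Qed.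

Lemma fclass_fsim_idx x y : is_fplay g A y -> fclass g x = fclass g y -> fsim_idx x y.
Proof.
move=> y_ok xy; have : fclass g y y by split; rewrite // fsim_idxP; exact: fsim_idx_refl.
by rewrite -xy => -[_ /fsim_idxP].
Qed.

Lemma Gdom_gcls x : is_fplay g A x -> Gdom (gcls g x).
Proof. by exists x. Qed.

Lemma rep_spec (C : G g A) : Gdom C -> is_fplay g A (rep C) /\ sval C = fclass g (rep C).
Proof.
rewrite /rep => C_ok; case: excluded_middle_informative => // C_ok'.
by case: constructive_indefinite_description.
Qed.

Lemma gcls_rep (C : G g A) : Gdom C -> C = gcls g (rep C).
Proof. by move=> /rep_spec[_ C_rep]; apply: Gcarrier_inj. Qed.

Lemma rep_gcls x :
  is_fplay g A x -> is_fplay g A (rep (gcls g x)) /\ fsim_idx (rep (gcls g x)) x.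
Proof.
move=> x_ok; have [rep_ok rep_cls] := rep_spec (Gdom_gcls x_ok).
by split=> //; apply: fclass_fsim_idx; rewrite // -rep_cls.
Qed.

Lemma counit_gcls x : is_fplay g A x -> counit (gcls g x) = x.2.
Proof. by move=> /rep_gcls[_ [<- _]]. Qed.

Lemma Gdom_gclsP (C : G g A) :
  Gdom C -> exists p a, is_fplay g A (p, a) /\ C = gcls g (p, a).
Proof.
move=> C_ok; have [rep_ok _] := rep_spec C_ok; rewrite (gcls_rep C_ok).
by move: rep_ok; case: (rep C) => p a; exists p, a.
Qed.

Lemma Grel_gcls r (t : 'I_(arity r) -> G g A) : Grel t ->
  exists p (a : 'I_(arity r) -> A), [/\ is_play g A p, forall i, lambda p (a i),
    Defs.rel A r a & forall i, t i = gcls g (p, a i)].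
Proof.
move=> [p [a [p_ok [pa [ra ta]]]]]; exists p, a; split=> // i.
exact: Gcarrier_inj.
Qed.

Lemma guarded_dom (X : A -> Prop) a : guarded g A X -> X a -> dom A a.
Proof.
case: g => /=.
- case=> [[r [t [rt Xt]]] Xa|[b [b_ok Xb]] /Xb -> //].
  by have [i <-] := Xt a Xa; exact: rel_dom rt.
- by case=> Y [Y_ok [XY _]] /XY /Y_ok.
- by case=> Y [Y_ok [XY _]] /XY /Y_ok.
Qed.

Lemma play_size_gt0 p : is_play g A p -> 0 < size p.
Proof. by case: p => [[]|]. Qed.

Lemma play_take p j : is_play g A p -> 0 < j -> is_play g A (take j p).
Proof.
move=> p_ok j0; split; first by case: p p_ok => [[]|] //; case: j j0.
by case: p_ok => _; rewrite -{1}(cat_take_drop j p) => /List.Forall_app[].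
Qed.

Lemma guarded_lambda p : is_play g A p -> guarded g A (lambda p).
Proof.
case/lastP: p => [[]//|p U] [_]; rewrite /lambda last_rcons -cats1.
by case/List.Forall_app=> _ /List.Forall_cons_iff[].
Qed.

Lemma lambda_rcons p S : lambda (rcons p S) = S.
Proof. exact: last_rcons. Qed.

Lemma play_rcons p S : is_play g A p -> guarded g A S -> is_play g A (rcons p S).
Proof.
move=> [_ p_ok] S_ok; split; first by case: p {p_ok}.
by rewrite -cats1; apply/List.Forall_app; split; last by constructor.
Qed.

Lemma lambda_take p j : j < size p -> lambda (take j.+1 p) = nth (fun _ => False) p j.
Proof. by move=> jp; rewrite /lambda -nth_last size_takel // nth_take. Qed.

Lemma gcls_take p a k j :
  lambda_from p k a -> 0 < j -> k <= j <= size p -> gcls g (p, a) = gcls g (take j p, a).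
Proof.
move=> from_p j0 /andP[kj jp]; apply: gcls_eq; split=> //; exists j => /=.
rewrite size_takel // take_takel //; split; [lia | done | |] => i /andP[ji ip].
  by apply: from_p; lia.
have -> : i = j by rewrite size_takel in ip; lia.
by rewrite take_takel //; apply: from_p; lia.
Qed.

Lemma gcls_rcons q S b :
  0 < size q -> S b -> lambda q b -> gcls g (q, b) = gcls g (rcons q S, b).
Proof.
move=> q0 Sb qb.
have take_q : take (size q) (rcons q S) = q by rewrite -cats1 take_size_cat.
rewrite (@gcls_take (rcons q S) b (size q) (size q)) ?take_q ?leqnn ?size_rcons ?leqnSn //.
move=> j /andP[qj]; rewrite size_rcons leq_eqVlt ltnS => /orP[/eqP->|jq].
  by rewrite -(size_rcons q S) take_size lambda_rcons.
by have -> : j = size q by [lia]; rewrite take_q.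
Qed.

End Classes.

Section Image.
Variables (g : guard_kind) (s : vocab) (A B : structure s) (f : G g A -> B).
Hypothesis hom_f : is_hom (G g A) B f.

Definition image_last (q : play_seq A) : B -> Prop :=
  fun y => exists b, lambda q b /\ y = f (gcls g (q, b)).

Lemma hom_dom_rcons q S b :
  is_play g A q -> guarded g A S -> S b -> dom B (f (gcls g (rcons q S, b))).
Proof.
move=> q_ok S_ok Sb; apply: (proj1 hom_f); apply: Gdom_gcls.
by split; [exact: play_rcons | rewrite /= lambda_rcons].
Qed.

Lemma hom_rel_rcons q S r (t : 'I_(arity r) -> A) :
    is_play g A q -> guarded g A S -> Defs.rel A r t -> (forall i, S (t i)) ->
  Defs.rel B r (fun i => f (gcls g (rcons q S, t i))).
Proof.
move=> q_ok S_ok rt St; apply: (proj2 hom_f r (fun i => gcls g (rcons q S, t i))).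
by exists (rcons q S), t; rewrite lambda_rcons; split; first exact: play_rcons.
Qed.

Lemma image_last_map_rcons q (Y : seq A) y :
    0 < size q -> (forall b, lambda q b -> List.In b Y) -> image_last q y ->
  List.In y (map (fun b => f (gcls g (rcons q (fun x => List.In x Y), b))) Y).
Proof.
move=> q0 qY [b [qb ->]]; rewrite (gcls_rcons _ (S := fun x => List.In x Y)) //; last exact: qY.
by apply: List.in_map; exact: qY.
Qed.

Lemma dom_map_rcons q (Y : seq A) y :
    is_play g A q -> guarded g A (fun x => List.In x Y) ->
    List.In y (map (fun b => f (gcls g (rcons q (fun x => List.In x Y), b))) Y) ->
  dom B y.
Proof. by move=> q_ok Y_ok /List.in_map_iff[b [<- Yb]]; exact: hom_dom_rcons. Qed.

End Image.

Section ImageGuarded.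
Variables (s : vocab) (A B : structure s).

Lemma image_last_atom (f : G AtomGuard A -> B) q :
  is_hom (G AtomGuard A) B f -> is_play AtomGuard A q -> atom_guarded (image_last f q).
Proof.
move=> hom_f q_ok; have q0 := play_size_gt0 q_ok.
case: (guarded_lambda q_ok) => [[r [t [rt qt]]]|[a [a_ok qa]]].
  have S_ok : guarded AtomGuard A (Defs.in_tuple t) by left; exists r, t.
  left; exists r, (fun i => f (gcls AtomGuard (rcons q (Defs.in_tuple t), t i))).
  split; first by apply: hom_rel_rcons => // i; exists i.
  move=> _ [b [qb ->]]; have [i tib] := qt b qb; exists i.
  by rewrite tib -gcls_rcons //; exists i.
have S_ok : guarded AtomGuard A (eq^~ a) by right; exists a.
right; exists (f (gcls AtomGuard (rcons q (eq^~ a), a))); split.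
  exact: hom_dom_rcons.
by move=> _ [b [qb ->]]; have ba := qa b qb; subst b; rewrite -gcls_rcons.
Qed.

Lemma image_last_loose (f : G LooseGuard A -> B) q :
  is_hom (G LooseGuard A) B f -> is_play LooseGuard A q -> loose_guarded (image_last f q).
Proof.
move=> hom_f q_ok; have q0 := play_size_gt0 q_ok.
case: (guarded_lambda q_ok) => Y [Y_ok [qY Y_pairs]].
pose S x := List.In x Y; have S_ok : guarded LooseGuard A S by exists Y.
pose F y := f (gcls LooseGuard (rcons q S, y)).
exists (map F Y); split; first by move=> y; exact: dom_map_rcons.
split; first by move=> y; exact: image_last_map_rcons.
move=> _ _ /List.in_map_iff[y [<- Yy]] /List.in_map_iff[y' [<- Yy']].
case: (Y_pairs y y' Yy Yy') => [->|[r [t [rt [[i ti] [[i' ti'] tY]]]]]]; first by left.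
right; exists r, (fun i => F (t i)); split; first exact: hom_rel_rcons.
split; first by exists i; rewrite ti.
split; first by exists i'; rewrite ti'.
by move=> j; apply: List.in_map.
Qed.

Lemma in_tuple_clique r (t : 'I_(arity r) -> A) :
  Defs.rel A r t -> clique_guarded (Defs.in_tuple t).
Proof.
move=> rt; exists (map t (enum 'I_(arity r))); split; [|split].
- by move=> _ /List.in_map_iff[i [<- _]]; exact: rel_dom rt.
- by move=> _ [i <-]; apply: List.in_map; apply/InP; rewrite mem_enum.
move=> _ _ /List.in_map_iff[i [<- _]] /List.in_map_iff[i' [<- _]].
by right; exists r, t; split=> //; split; [exists i | exists i'].
Qed.

Lemma image_last_clique (f : G CliqueGuard A -> B) q :
  is_hom (G CliqueGuard A) B f -> is_play CliqueGuard A q -> clique_guarded (image_last f q).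
Proof.
move=> hom_f q_ok; have q0 := play_size_gt0 q_ok.
case: (guarded_lambda q_ok) => Y [Y_ok [qY Y_pairs]].
pose S x := List.In x Y; have S_ok : guarded CliqueGuard A S by exists Y.
have qS_ok := play_rcons q_ok S_ok.
pose F y := f (gcls CliqueGuard (rcons q S, y)).
exists (map F Y); split; first by move=> y; exact: dom_map_rcons.
split; first by move=> y; exact: image_last_map_rcons.
move=> _ _ /List.in_map_iff[y [<- Yy]] /List.in_map_iff[y' [<- Yy']].
case: (Y_pairs y y' Yy Yy') => [->|[r [t [rt [[i ti] [i' ti']]]]]]; first by left.
(* The atom covering y and y' may involve elements outside Y, so its support
   is appended as a further guarded set. *)
have T_ok : guarded CliqueGuard A (Defs.in_tuple t) := in_tuple_clique rt.
have F_rcons x : Defs.in_tuple t x -> S x ->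
    F x = f (gcls CliqueGuard (rcons (rcons q S) (Defs.in_tuple t), x)).
  by move=> tx Sx; rewrite /F -(gcls_rcons _ (S := Defs.in_tuple t)) ?size_rcons ?lambda_rcons.
right; exists r, (fun i => f (gcls CliqueGuard (rcons (rcons q S) (Defs.in_tuple t), t i))).
split; first by apply: hom_rel_rcons => // j; exists j.
split; first by exists i; rewrite ti F_rcons //; exists i.
by exists i'; rewrite ti' F_rcons //; exists i'.
Qed.

End ImageGuarded.

Lemma image_last_guarded g s (A B : structure s) (f : G g A -> B) q :
  is_hom (G g A) B f -> is_play g A q -> guarded g B (image_last f q).
Proof.
case: g f => f; [exact: image_last_atom | exact: image_last_loose | exact: image_last_clique].
Qed.

Section Coextension.
Variables (g : guard_kind) (s : vocab) (A B : structure s) (f : G g A -> B).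
Implicit Types (p q : play_seq A) (a : A).

Lemma size_Vplay p : size (Vplay f p) = size p.
Proof. by rewrite size_map size_iota. Qed.

Lemma take_Vplay p j : j <= size p -> take j (Vplay f p) = Vplay f (take j p).
Proof.
move=> jp; rewrite /Vplay -map_take take_iota size_takel // (minn_idPl jp).
apply/eq_in_map => i; rewrite mem_iota => /andP[_ ij].
by rewrite /Vset take_takel //; lia.
Qed.

Lemma nth_Vplay p U i : i < size p -> nth U (Vplay f p) i = Vset f p i.+1.
Proof. by move=> ip; rewrite (nth_map 0) ?size_iota // nth_iota. Qed.

Lemma lambda_take_Vplay p j : 0 < j <= size p -> lambda (take j (Vplay f p)) = Vset f p j.
Proof.
by case: j => [//|j] jp; rewrite lambda_take ?nth_Vplay ?size_Vplay.
Qed.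

Lemma lambda_Vplay p : 0 < size p -> lambda (Vplay f p) = image_last f p.
Proof.
move=> p0; rewrite -(take_size (Vplay f p)) size_Vplay lambda_take_Vplay ?p0 ?leqnn //.
by rewrite -[in RHS](take_size p).
Qed.

Lemma Vset_gcls p a k j :
  lambda_from p k a -> 0 < j -> k <= j <= size p -> Vset f p j (f (gcls g (p, a))).
Proof.
move=> from_p j0 kjp; exists a; split; first exact: from_p.
by rewrite (gcls_take g from_p j0 kjp).
Qed.

Lemma Vplay_fsim_idx p q a : fsim_idx (p, a) (q, a) ->
  fsim_idx (Vplay f p, f (gcls g (p, a))) (Vplay f q, f (gcls g (p, a))).
Proof.
move=> pq; have pq_cls := gcls_eq g pq.
case: pq => _ [k [k_le pq_k from_p from_q]]; split=> //; exists k => /=.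
rewrite /= in k_le pq_k from_p from_q.
rewrite !size_Vplay !take_Vplay ?pq_k; [|lia|lia].
split=> // j /andP[kj]; rewrite size_Vplay => jp; rewrite lambda_take_Vplay; try lia.
  by apply: Vset_gcls from_p _ _; lia.
by rewrite pq_cls; apply: Vset_gcls from_q _ _; lia.
Qed.

Lemma coext_gcls p a :
  is_fplay g A (p, a) -> coext f (gcls g (p, a)) = gcls g (Vplay f p, f (gcls g (p, a))).
Proof.
move=> x_ok; rewrite /coext; case: (rep_gcls x_ok); case: (rep _) => p' a' _ sim /=.
have a'a : a' = a by case: sim.
subst a'; rewrite -(gcls_eq g sim); apply: gcls_eq; exact: Vplay_fsim_idx.
Qed.

Hypothesis hom_f : is_hom (G g A) B f.

Lemma Vplay_play p : is_play g A p -> is_play g B (Vplay f p).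
Proof.
move=> p_ok; split.
  by move: (play_size_gt0 p_ok); rewrite -(size_Vplay p); case: (Vplay f p).
apply/List.Forall_forall => _ /List.in_map_iff[j [<- /InP]]; rewrite mem_iota => /andP[j0 _].
exact: image_last_guarded hom_f (play_take p_ok j0).
Qed.

Lemma Vplay_fplay p a : is_fplay g A (p, a) -> is_fplay g B (Vplay f p, f (gcls g (p, a))).
Proof.
move=> [p_ok pa]; split; first exact: Vplay_play p_ok.
by rewrite /= lambda_Vplay; [exists a | exact: play_size_gt0 p_ok].
Qed.

End Coextension.

Section ComonadLaws.
Variables (g : guard_kind) (s : vocab).

Lemma counit_hom (A : structure s) : is_hom (G g A) A (@counit g s A).
Proof.
split.
  move=> _ /Gdom_gclsP[p [a [[p_ok pa] ->]]]; rewrite counit_gcls //.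
  exact: guarded_dom (guarded_lambda p_ok) pa.
move=> r t /Grel_gcls[p [a [p_ok pa ra ta]]].
suff -> : (fun i => counit (t i)) = a by [].
by apply: functional_extensionality => i; rewrite ta counit_gcls //; split; last exact: pa.
Qed.

Lemma coext_hom (A B : structure s) (f : G g A -> B) :
  is_hom (G g A) B f -> is_hom (G g A) (G g B) (coext f).
Proof.
move=> hom_f; split.
  move=> _ /Gdom_gclsP[p [a [x_ok ->]]]; rewrite coext_gcls //.
  exact/Gdom_gcls/Vplay_fplay.
move=> r t rt; have [p [a [p_ok pa ra ta]]] := Grel_gcls rt.
exists (Vplay f p), (fun i => f (t i)); split; first exact: Vplay_play.
split.
  by move=> i; rewrite lambda_Vplay; [exists (a i); rewrite ta | exact: play_size_gt0 p_ok].
split; first exact: (proj2 hom_f r t rt).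
by move=> i; rewrite ta coext_gcls //; split; last exact: pa.
Qed.

Lemma image_last_counit (A : structure s) q :
  is_play g A q -> image_last (@counit g s A) q = lambda q.
Proof.
move=> q_ok; apply: predext => y; split=> [[b [qb ->]]|qy]; last by exists y; rewrite counit_gcls.
by rewrite counit_gcls.
Qed.

Lemma Vplay_counit (A : structure s) p : is_play g A p -> Vplay (@counit g s A) p = p.
Proof.
move=> p_ok; apply: (@eq_from_nth _ (fun _ => False)); rewrite size_Vplay // => i ip.
by rewrite nth_Vplay // -lambda_take //; exact: image_last_counit (play_take p_ok _).
Qed.

Lemma image_last_coext (A B C : structure s) (f : G g A -> B) (h : G g B -> C) q :
  is_play g A q -> image_last (fun y => h (coext f y)) q = image_last h (Vplay f q).
Proof.
move=> q_ok; have lambda_fq := lambda_Vplay f (play_size_gt0 q_ok).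
apply: predext => y; split.
  move=> [b [qb ->]]; exists (f (gcls g (q, b))).
  by rewrite lambda_fq coext_gcls //; split=> //; exists b.
move=> [c [+ ->]]; rewrite lambda_fq => -[b [qb ->]].
by exists b; rewrite coext_gcls.
Qed.

Lemma Vplay_coext (A B C : structure s) (f : G g A -> B) (h : G g B -> C) p :
  is_play g A p -> Vplay (fun y => h (coext f y)) p = Vplay h (Vplay f p).
Proof.
move=> p_ok; rewrite [in RHS]/Vplay size_Vplay; apply/eq_in_map => j.
rewrite mem_iota => /andP[j0 jp].
change (image_last (fun y => h (coext f y)) (take j p) = image_last h (take j (Vplay f p))).
by rewrite image_last_coext ?take_Vplay //; exact: play_take.
Qed.

End ComonadLaws.

Theorem theorem3p5 (g : guard_kind) (s : vocab) :
  (* the counit and coextensions are morphisms of sigma-structures *)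
  (forall A : structure s, is_hom (G g A) A (@counit g s A)) /\
  (forall (A B : structure s) (f : G g A -> B),
      is_hom (G g A) B f -> is_hom (G g A) (G g B) (coext f)) /\
  (* epsilon_A^* = id *)
  (forall (A : structure s) (x : G g A),
      dom (G g A) x -> coext (@counit g s A) x = x) /\
  (* epsilon o f^* = f *)
  (forall (A B : structure s) (f : G g A -> B),
      is_hom (G g A) B f ->
      forall x : G g A, dom (G g A) x -> counit (coext f x) = f x) /\
  (* (g o f^* )^* = g^* o f^* *)
  (forall (A B C : structure s) (f : G g A -> B) (h : G g B -> C),
      is_hom (G g A) B f -> is_hom (G g B) C h ->
      forall x : G g A, dom (G g A) x ->
        coext (fun y => h (coext f y)) x = coext h (coext f x)).
Proof.
split; first exact: counit_hom.
split; first exact: coext_hom.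
split.
  move=> A _ /Gdom_gclsP[p [a [[p_ok pa] ->]]].
  by rewrite coext_gcls // counit_gcls // Vplay_counit.
split.
  move=> A B f hom_f _ /Gdom_gclsP[p [a [x_ok ->]]].
  by rewrite coext_gcls // counit_gcls //; exact: Vplay_fplay.
move=> A B C f h hom_f _ _ /Gdom_gclsP[p [a [[p_ok pa] ->]]].
by rewrite !coext_gcls ?Vplay_coext //; exact: Vplay_fplay.
Qed.
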